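(* Let $n$ be even, $V=\{1,\dots,n\}$, and let $\{C,\bar C\}$ be a partition of $V$ with $|C|=|\bar C|=n/2$. Let $0\le p_{\rm out}$, $p_{\rm in}\le1$ with $0<p_{\rm in}+p_{\rm out}<2$. Let $A$ be the random symmetric $\{0,1\}$ adjacency matrix of the stochastic block model: its entries are independent Bernoulli variables (up to symmetry), with $a_{ij}=1$ with probability $p_{\rm in}$ if $i,j$ lie in the same set of the partition and with probability $p_{\rm out}$ otherwise. Let $M=A-\frac{\mathbb{1}^\top A\mathbb{1}}{n^2}J$ be its modularity matrix, let $z\in\mathbb{R}^n$ with $z_i=1$ if $i\in C$ and $z_i=-1$ otherwise, $Z=zz^\top$, and $$\gamma=\frac{p_{\rm in}-p_{\rm out}}{\sqrt{(p_{\rm in}+p_{\rm out})(2-p_{\rm in}-p_{\rm out})}}.$$ Then for every fixed $\varepsilon>0$, the probability that $\cos(M,Z)^2\ge\gamma^2-\varepsilon$ tends to $1$ as $n\to\infty$.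
   Context: $\mathbb{1}$ is the all-ones vector and $J=\mathbb{1}\mathbb{1}^\top$ the all-ones matrix. For nonzero matrices, $\cos(A,B)=\mathrm{tr}(AB^\top)/(\|A\|_F\|B\|_F)$ with $\|\cdot\|_F$ the Frobenius norm. *)

From HB Require Import structures.
From mathcomp Require Import all_boot all_order all_algebra.
Set Implicit Arguments. Unset Strict Implicit. Unset Printing Implicit Defensive.
Import Order.TTheory GRing.Theory Num.Theory.
Local Open Scope ring_scope.

Section SBM.
Variable R : archiRealFieldType.

Definition frob2 (m n : nat) (A : 'M[R]_(m, n)) : R :=
  \sum_(i < m) \sum_(j < n) A i j ^+ 2.

(* cos(A,B)^2 = tr(A B^T)^2 / (||A||_F^2 ||B||_F^2)  (square written out,
   avoiding square roots) *)
Definition cos2 (n : nat) (A B : 'M[R]_n) : R :=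
  (\tr (A *m B^T)) ^+ 2 / (frob2 A * frob2 B).

Definition sbm_p (n : nat) (pin pout : R) (C : {set 'I_n}) (i j : 'I_n) : R :=
  if (i \in C) == (j \in C) then pin else pout.

(* probability weight of a symmetric boolean matrix: independent Bernoulli
   entries a_ij for i <= j *)
Definition sbm_weight (n : nat) (pin pout : R) (C : {set 'I_n})
    (A : 'M[bool]_n) : R :=
  \prod_(i < n) \prod_(j < n | (i <= j)%N)
     (if A i j then sbm_p pin pout C i j else 1 - sbm_p pin pout C i j).

Definition sbm_prob (n : nat) (pin pout : R) (C : {set 'I_n})
    (E : pred 'M[bool]_n) : R :=
  \sum_(A : 'M[bool]_n | (A^T == A) && E A) sbm_weight pin pout C A.

Definition adjR (n : nat) (A : 'M[bool]_n) : 'M[R]_n :=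
  map_mx (fun b : bool => (b : nat)%:R) A.

Definition modularity (n : nat) (A : 'M[R]_n) : 'M[R]_n :=
  A - ((\sum_(i < n) \sum_(j < n) A i j) / (n%:R ^+ 2)) *: const_mx 1.

Definition zvec (n : nat) (C : {set 'I_n}) : 'cV[R]_n :=
  \col_i (if i \in C then 1 else -1).
Definition Zmat (n : nat) (C : {set 'I_n}) : 'M[R]_n :=
  zvec C *m (zvec C)^T.

Definition gamma2 (pin pout : R) : R :=
  (pin - pout) ^+ 2 / ((pin + pout) * (2 - pin - pout)).

(* the event  cos(M,Z)^2 >= gamma^2 - eps  (M nonzero so that cos is defined) *)
Definition good_event (n : nat) (pin pout eps : R) (C : {set 'I_n})
    (A : 'M[bool]_n) : bool :=
  (modularity (adjR A) != 0) &&
  (gamma2 pin pout - eps <= cos2 (modularity (adjR A)) (Zmat C)).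

End SBM.

From HB Require Import structures.
From mathcomp Require Import all_boot all_order all_algebra.
From mathcomp Require Import ring lra zify.
Set Implicit Arguments. Unset Strict Implicit. Unset Printing Implicit Defensive.
Import Order.TTheory GRing.Theory Num.Theory.
Local Open Scope ring_scope.

(* Put x := 1^T A 1 / n^2 and y := z^T A z / n^2.  Since sum_i z_i = 0, a
   direct computation gives cos(M, Z)^2 = y^2 / (x - x^2), and gamma^2 is the
   same expression evaluated at the means pbar = (pin + pout) / 2 of x and
   q = (pin - pout) / 2 of y.  Both n^2 (x - pbar) and n^2 (y - q) are linear
   forms in the independent centred entries a_ij - p_ij (i <= j) with
   coefficients of absolute value at most 2, so their variances are O(n^2).
   By Chebyshev, x and y stay within a fixed distance r of their means with
   probability 1 - O(1/n^2), and for r small enough in terms of eps this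
   forces y^2 / (x - x^2) >= gamma^2 - eps. *)

Local Notation edge n := ('I_n * 'I_n)%type.

Definition upper {n : nat} (e : edge n) : bool := (e.1 <= e.2)%N.

Definition pair_mult (R : pzRingType) {n : nat} (e : edge n) : R :=
  if e.1 == e.2 then 1 else 2.

Lemma sum_symmetric_upper (R : pzRingType) (n : nat) (f : 'I_n -> 'I_n -> R) :
  (forall i j, f i j = f j i) ->
  \sum_i \sum_j f i j = \sum_(e : edge n | upper e) pair_mult R e * f e.1 e.2.
Proof.
move=> f_sym; rewrite pair_big /= (bigID upper) /=.
have -> : \sum_(e : edge n | ~~ upper e) f e.1 e.2
        = \sum_(e : edge n | (e.1 < e.2)%N) f e.1 e.2.
  rewrite (reindex (fun e : edge n => (e.2, e.1))) /=; last first.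
    by exists (fun e : edge n => (e.2, e.1)) => -[].
  by apply: eq_big => e; [rewrite /upper -ltnNge | rewrite f_sym].
rewrite [X in X + _]big_mkcond [X in _ + X]big_mkcond [RHS]big_mkcond -big_split.
apply: eq_bigr => -[i j] _; rewrite /upper /pair_mult /=.
case: (ltngtP i j) => [ltij | ltji | /val_inj->]; rewrite ?eqxx ?mul1r ?addr0 //.
by rewrite -val_eqE (ltn_eqF ltij) mulr2n mulrDl mul1r.
Qed.

(* A symmetric boolean matrix is determined by its entries on and above the
   diagonal, so summing a product over those entries factorizes. *)
Lemma sum_symmetric_prod (R : comPzRingType) (n : nat) (F : 'I_n -> 'I_n -> bool -> R) :
  \sum_(A : 'M[bool]_n | A^T == A) \prod_(e : edge n | upper e) F e.1 e.2 (A e.1 e.2)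
  = \prod_(e : edge n | upper e) (F e.1 e.2 true + F e.1 e.2 false).
Proof.
pose sym_of (f : {ffun edge n -> bool}) : 'M[bool]_n :=
  \matrix_(i, j) (if (i <= j)%N then f (i, j) else f (j, i)).
pose upper_part (A : 'M[bool]_n) : {ffun edge n -> bool} :=
  [ffun e => if upper e then A e.1 e.2 else false].
pose Q (e : edge n) : pred bool := if upper e then predT else pred1 false.
pose F' (e : edge n) (b : bool) := if upper e then F e.1 e.2 b else 1.
have -> : \prod_(e : edge n | upper e) (F e.1 e.2 true + F e.1 e.2 false)
        = \prod_(e : edge n) \sum_(b | Q e b) F' e b.
  rewrite [RHS](bigID upper) /= [X in _ * X]big1 ?mulr1; last first.
    by move=> e /negbTE up_e; rewrite /Q /F' up_e big_pred1_eq.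
  by apply: eq_bigr => e up_e; rewrite /Q /F' up_e big_bool /= addrC.
rewrite bigA_distr_big_dep (reindex_onto sym_of upper_part); last first.
  move=> A /eqP symA; apply/matrixP => i j; rewrite !mxE !ffunE /upper /=.
  case: (leqP i j) => // ltji; rewrite -[in RHS]symA mxE.
  by rewrite ifT // ltnW.
apply: eq_big => [f|f _].
  apply/idP/idP => [/andP[_ /eqP <-]|/familyP Qf].
    by apply/familyP => e; rewrite /Q ffunE; case: (upper e).
  apply/andP; split.
    by apply/eqP/matrixP => i j; rewrite !mxE; case: (ltngtP i j) => // /val_inj->.
  apply/eqP/ffunP => -[i j]; rewrite !ffunE /upper /=.
  case: (leqP i j) => [leij|ltji]; first by rewrite mxE leij.
  by have := Qf (i, j); rewrite /Q /upper /= leqNgt ltji inE => /eqP.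
rewrite [RHS](bigID upper) /= [X in _ * X]big1 ?mulr1; last first.
  by move=> e /negbTE up_e; rewrite /F' up_e.
by apply: eq_bigr => -[i j] up_e; rewrite /F' up_e mxE; move: up_e; rewrite /upper /= => ->.
Qed.

Section BernoulliMatrix.
Variables (R : realDomainType) (n : nat) (p : 'I_n -> 'I_n -> R).
Hypothesis p01 : forall i j, 0 <= p i j <= 1.

Definition bern_weight (A : 'M[bool]_n) : R :=
  \prod_(i < n) \prod_(j < n | (i <= j)%N) (if A i j then p i j else 1 - p i j).

Definition bern_prob (E : pred 'M[bool]_n) : R :=
  \sum_(A : 'M[bool]_n | (A^T == A) && E A) bern_weight A.

Definition expect (X : 'M[bool]_n -> R) : R :=
  \sum_(A : 'M[bool]_n | A^T == A) bern_weight A * X A.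

Definition centered (e : edge n) (A : 'M[bool]_n) : R :=
  (A e.1 e.2 : nat)%:R - p e.1 e.2.

Lemma bern_weightE A : bern_weight A =
  \prod_(e : edge n | upper e) (if A e.1 e.2 then p e.1 e.2 else 1 - p e.1 e.2).
Proof. by rewrite /bern_weight pair_big_dep. Qed.

Lemma bern_weight_ge0 A : 0 <= bern_weight A.
Proof.
apply: prodr_ge0 => i _; apply: prodr_ge0 => j _.
by have /andP[p_ge0 p_le1] := p01 i j; case: (A i j); rewrite ?subr_ge0.
Qed.

Lemma eq_expect X Y : (forall A, A^T == A -> X A = Y A) -> expect X = expect Y.
Proof. by move=> eqXY; apply: eq_bigr => A symA; rewrite eqXY. Qed.

Lemma ler_expect X Y : (forall A, A^T == A -> X A <= Y A) -> expect X <= expect Y.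
Proof. by move=> leXY; apply: ler_sum => A symA; rewrite ler_wpM2l ?bern_weight_ge0 ?leXY. Qed.

Lemma expectD X Y : expect (fun A => X A + Y A) = expect X + expect Y.
Proof. by rewrite /expect -big_split; apply: eq_bigr => A _; rewrite mulrDr. Qed.

Lemma expectZ c X : expect (fun A => c * X A) = c * expect X.
Proof. by rewrite /expect mulr_sumr; apply: eq_bigr => A _; rewrite mulrCA. Qed.

Lemma expect_sum (I : finType) (P : pred I) (X : I -> 'M[bool]_n -> R) :
  expect (fun A => \sum_(k | P k) X k A) = \sum_(k | P k) expect (X k).
Proof. by rewrite /expect exchange_big; apply: eq_bigr => A _; rewrite mulr_sumr. Qed.

Lemma expect_prod (g : 'I_n -> 'I_n -> bool -> R) :
  expect (fun A => \prod_(e : edge n | upper e) g e.1 e.2 (A e.1 e.2))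
  = \prod_(e : edge n | upper e)
      (p e.1 e.2 * g e.1 e.2 true + (1 - p e.1 e.2) * g e.1 e.2 false).
Proof.
rewrite /expect; under eq_bigr => A _ do rewrite bern_weightE -big_split /=.
exact: (sum_symmetric_prod
  (fun i j b => (if b then p i j else 1 - p i j) * g i j b)).
Qed.

Lemma expect1 : expect (fun => 1) = 1.
Proof.
have := expect_prod (fun _ _ _ => 1); rewrite big1 // => ->.
by apply: big1 => e _; rewrite !mulr1 addrC subrK.
Qed.

Lemma expect_centered_mul e f : upper e -> upper f ->
  expect (fun A => centered e A * centered f A)
  = if e == f then p e.1 e.2 * (1 - p e.1 e.2) else 0.
Proof.
move=> up_e up_f.
pose pick_at (u : edge n) (i j : 'I_n) (b : bool) : R :=
  if (i, j) == u then (b : nat)%:R - p i j else 1.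
have pickE u (A : 'M[bool]_n) : upper u ->
    \prod_(v : edge n | upper v) pick_at u v.1 v.2 (A v.1 v.2) = centered u A :> R.
  move=> up_u; rewrite (bigD1 u) //= /pick_at -surjective_pairing eqxx.
  rewrite big1 ?mulr1 // => v /andP[_ /negbTE]; by rewrite -surjective_pairing => ->.
rewrite (@eq_expect _ (fun A => \prod_(v : edge n | upper v)
    (pick_at e v.1 v.2 (A v.1 v.2) * pick_at f v.1 v.2 (A v.1 v.2)))); last first.
  by move=> A _; rewrite big_split /= pickE // pickE.
rewrite (expect_prod (fun i j b => pick_at e i j b * pick_at f i j b)).
rewrite (bigD1 e) //= /pick_at -surjective_pairing eqxx.
case: (eqVneq e f) => [<-|neq_ef].
  rewrite big1 ?mulr1 /=; first by ring.
  move=> v /andP[_ /negbTE]; rewrite -surjective_pairing => ->.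
  by rewrite !mulr1 addrC subrK.
rewrite !mulr1 /=.
have -> : p e.1 e.2 * (1 - p e.1 e.2) + (1 - p e.1 e.2) * (0 - p e.1 e.2) = 0 by ring.
by rewrite mul0r.
Qed.

Lemma expect_linear_sqr_le (c : edge n -> R) :
  expect (fun A => (\sum_(e | upper e) c e * centered e A) ^+ 2)
  <= \sum_(e | upper e) c e ^+ 2.
Proof.
rewrite (@eq_expect _ (fun A => \sum_(e | upper e) \sum_(f | upper f)
    (c e * c f) * (centered e A * centered f A))); last first.
  move=> A _; rewrite expr2 mulr_suml; apply: eq_bigr => e _.
  by rewrite mulr_sumr; apply: eq_bigr => f _; ring.
rewrite expect_sum; apply: ler_sum => e up_e.
rewrite expect_sum (bigD1 e) //= big1 ?addr0; last first.
  move=> f /andP[up_f neq_fe].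
  by rewrite expectZ expect_centered_mul // eq_sym (negbTE neq_fe) mulr0.
rewrite expectZ expect_centered_mul // eqxx -expr2 ler_piMr ?sqr_ge0 //.
by have /andP[p_ge0 p_le1] := p01 e.1 e.2; nra.
Qed.

Lemma bern_probE E : bern_prob E = expect (fun A => (E A : nat)%:R).
Proof.
rewrite /bern_prob /expect big_mkcondr /=.
by apply: eq_bigr => A _; case: (E A); rewrite ?mulr1 ?mulr0.
Qed.

Lemma bern_prob_predC E : bern_prob E = 1 - bern_prob (predC E).
Proof.
have : bern_prob E + bern_prob (predC E) = 1.
  rewrite !bern_probE -expectD -[RHS]expect1; apply: eq_expect => A _ /=.
  by case: (E A); rewrite ?addr0 ?add0r.
by move=> <-; rewrite addrK.
Qed.

Lemma bern_prob_le_expect (E : pred 'M[bool]_n) (X : 'M[bool]_n -> R) :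
  (forall A, A^T == A -> E A -> 1 <= X A) -> (forall A, A^T == A -> 0 <= X A) ->
  bern_prob E <= expect X.
Proof.
move=> X_ge1 X_ge0; rewrite bern_probE; apply: ler_expect => A symA.
by case EA: (E A); [exact: X_ge1 | exact: X_ge0].
Qed.

Definition deviation (w : 'I_n -> 'I_n -> R) (A : 'M[bool]_n) : R :=
  \sum_i \sum_j w i j * ((A i j : nat)%:R - p i j).

Lemma deviation_upper w A :
  (forall i j, w i j = w j i) -> (forall i j, p i j = p j i) -> A^T == A ->
  deviation w A = \sum_(e | upper e) (pair_mult R e * w e.1 e.2) * centered e A.
Proof.
move=> w_sym p_sym /eqP symA; rewrite /deviation sum_symmetric_upper.
  by apply: eq_bigr => e _; rewrite mulrA.
by move=> i j; rewrite w_sym p_sym -[in LHS]symA mxE.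
Qed.

(* The deviation is a combination of the independent centred entries on and
   above the diagonal, with coefficients at most 2. *)
Lemma expect_deviation_sqr_le w :
  (forall i j, w i j = w j i) -> (forall i j, w i j ^+ 2 <= 1) ->
  (forall i j, p i j = p j i) ->
  expect (fun A => deviation w A ^+ 2) <= 4 * n%:R ^+ 2.
Proof.
move=> w_sym w_le1 p_sym.
rewrite (@eq_expect _ (fun A => (\sum_(e | upper e)
    (pair_mult R e * w e.1 e.2) * centered e A) ^+ 2)); last first.
  by move=> A symA; rewrite deviation_upper.
apply: le_trans (expect_linear_sqr_le _) _.
apply: (@le_trans _ _ (\sum_(e : edge n) (4 : R))).
  rewrite [X in _ <= X](bigID upper) /= -[X in X <= _]addr0 lerD ?sumr_ge0 //.
  apply: ler_sum => e _; have := w_le1 e.1 e.2; rewrite exprMn /pair_mult.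
  by case: ifP => _ w2; nra.
by rewrite sumr_const card_prod card_ord expr2 -natrM mulr_natr.
Qed.

End BernoulliMatrix.

Lemma sum_const_sqr (R : pzSemiRingType) (n : nat) (c : R) :
  \sum_(i < n) \sum_(j < n) c = c * n%:R ^+ 2.
Proof.
under eq_bigr => i _ do rewrite sumr_const card_ord.
by rewrite sumr_const card_ord -mulrnA expr2 -natrM mulr_natr.
Qed.

Lemma sum_mul_outer (R : comPzSemiRingType) (n : nat) (a : R) (x : 'I_n -> R) :
  \sum_i \sum_j a * (x i * x j) = a * (\sum_i x i) ^+ 2.
Proof.
rewrite expr2 mulr_suml mulr_sumr; apply: eq_bigr => i _.
by rewrite !mulr_sumr; apply: eq_bigr => j _.
Qed.

Section Perturbation.
Variable R : realFieldType.

Lemma sqr_lt_sqr_bounds (u r : R) : 0 < r -> u ^+ 2 < r ^+ 2 -> - r < u < r.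
Proof.
move=> r_gt0; rewrite -real_normK ?num_real // -ltr_norml.
by rewrite ltr_sqr // nnegrE ?normr_ge0 ?ltW.
Qed.

Lemma scaled_sqr_lt (a b c r : R) : 0 < c ->
  (a - b * c) ^+ 2 < (r * c) ^+ 2 -> (a / c - b) ^+ 2 < r ^+ 2.
Proof.
move=> c_gt0; have -> : a - b * c = (a / c - b) * c by field; exact: lt0r_neq0.
by rewrite !exprMn ltr_pM2r // exprn_gt0.
Qed.

Lemma var_perturb (p x r : R) : 0 <= p <= 1 -> 0 < r <= 1 ->
  (x - p) ^+ 2 < r ^+ 2 -> p * (1 - p) - 2 * r <= x - x ^+ 2 <= p * (1 - p) + 2 * r.
Proof.
move=> /andP[p_ge0 p_le1] /andP[r_gt0 r_le1] close.
have /andP[u_lo u_hi] := sqr_lt_sqr_bounds r_gt0 close.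
have [lin_lo lin_hi] : - r <= (x - p) * (1 - 2 * p) /\ (x - p) * (1 - 2 * p) <= r.
  by split; nra.
have -> : x - x ^+ 2 = p * (1 - p) + (x - p) * (1 - 2 * p) - (x - p) ^+ 2 by ring.
have : r ^+ 2 <= r by rewrite expr2 ler_piMr // ltW.
have := sqr_ge0 (x - p); lra.
Qed.

Lemma sqr_perturb (q y r : R) : 4 * q ^+ 2 <= 1 -> 0 < r ->
  (y - q) ^+ 2 < r ^+ 2 -> q ^+ 2 - r <= y ^+ 2.
Proof.
move=> q_small r_gt0 close.
have /andP[v_lo v_hi] := sqr_lt_sqr_bounds r_gt0 close.
have /andP[q_lo q_hi] : - 1 <= 2 * q <= 1.
  rewrite -ler_norml -ler_sqr ?nnegrE ?normr_ge0 // real_normK ?num_real //.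
  by rewrite expr1n exprMn; lra.
have lin_lo : - r <= 2 * q * (y - q) by nra.
have -> : y ^+ 2 = q ^+ 2 + 2 * q * (y - q) + (y - q) ^+ 2 by ring.
have := sqr_ge0 (y - q); lra.
Qed.

(* Chosen so that 4 r <= D and 2 r <= eps D^2, the two smallness conditions
   needed in ratio_stable. *)
Definition radius (D eps : R) : R := D ^+ 2 * eps / (4 * (1 + eps)).

Lemma radius_gt0 D eps : 0 < D -> 0 < eps -> 0 < radius D eps.
Proof. by move=> D_gt0 eps_gt0; rewrite divr_gt0 ?mulr_gt0 ?exprn_gt0 //; lra. Qed.

Lemma radius_small D eps : 0 < D <= 1 -> 0 < eps ->
  4 * radius D eps <= D /\ 2 * radius D eps <= eps * D ^+ 2.
Proof.
move=> /andP[D_gt0 D_le1] eps_gt0.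
have r4 : 4 * radius D eps = D ^+ 2 * (eps / (1 + eps)).
  by rewrite /radius; field; lra.
have frac_le1 : eps / (1 + eps) <= 1 by rewrite ler_pdivrMr; lra.
have frac_le : eps / (1 + eps) <= eps by rewrite ler_pdivrMr ?ler_peMr; lra.
have D2_le : D ^+ 2 <= D by rewrite expr2 ler_piMr // ltW.
have D2_ge0 := sqr_ge0 D.
have := ler_wpM2l D2_ge0 frac_le1; have := ler_wpM2l D2_ge0 frac_le.
have := mulr_ge0 (ltW eps_gt0) D2_ge0; split; lra.
Qed.

Lemma ratio_stable (p q eps x y : R) :
  0 < p * (1 - p) -> 4 * q ^+ 2 <= 1 -> 0 < eps ->
  (x - p) ^+ 2 < radius (p * (1 - p)) eps ^+ 2 ->
  (y - q) ^+ 2 < radius (p * (1 - p)) eps ^+ 2 ->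
  0 < x - x ^+ 2 /\ q ^+ 2 / (p * (1 - p)) - eps <= y ^+ 2 / (x - x ^+ 2).
Proof.
move=> D_gt0 q_small eps_gt0.
have p01 : 0 <= p <= 1 by apply/andP; split; nra.
have D_le : p * (1 - p) <= 1 / 4 by have := sqr_ge0 (2 * p - 1); nra.
set D := p * (1 - p) in D_gt0 D_le *; set r := radius D eps => x_close y_close.
have r_gt0 : 0 < r := radius_gt0 D_gt0 eps_gt0.
have [r_le r_le'] : 4 * r <= D /\ 2 * r <= eps * D ^+ 2.
  by apply: radius_small => //; apply/andP; split; lra.
(* Hiding the bodies of r and D keeps lra and nra from expanding them. *)
clearbody r.
have r_bounds : 0 < r <= 1 by apply/andP; split; lra.
have /andP[s_lo s_hi] := var_perturb p01 r_bounds x_close.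
rewrite -/D in s_lo s_hi; clearbody D.
have y2_lo := sqr_perturb q_small r_gt0 y_close.
set s := x - x ^+ 2 in s_lo s_hi *.
have s_gt0 : D / 2 <= s by lra.
split; first lra.
rewrite -subr_ge0.
have -> : y ^+ 2 / s - (q ^+ 2 / D - eps) = (y ^+ 2 * D - q ^+ 2 * s + eps * D * s) / (D * s).
  by field; apply/andP; split; apply: lt0r_neq0; lra.
apply: divr_ge0; last by apply: mulr_ge0; lra.
have : eps * D * (D / 2) <= eps * D * s by rewrite ler_wpM2l // mulr_ge0 // ltW.
have : (q ^+ 2 - r) * D <= y ^+ 2 * D by rewrite ler_wpM2r // ltW.
have : q ^+ 2 * s <= q ^+ 2 * (D + 2 * r) by rewrite ler_wpM2l ?sqr_ge0 // ltW.
have : r * D <= r * (1 / 4) by rewrite ler_wpM2l // ltW.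
have : r * (4 * q ^+ 2) <= r * 1 by rewrite ler_wpM2l // ltW.
lra.
Qed.

End Perturbation.

Section Community.
Variables (R : archiRealFieldType) (n : nat).

Lemma frob2_adjR (A : 'M[bool]_n) : frob2 (adjR R A) = \sum_i \sum_j adjR R A i j.
Proof.
apply: eq_bigr => i _; apply: eq_bigr => j _.
by rewrite mxE; case: (A i j); rewrite ?expr1n ?expr0n.
Qed.

Lemma frob2_modularity (M : 'M[R]_n) : (0 < n)%N ->
  frob2 (modularity M) = frob2 M - (\sum_i \sum_j M i j) ^+ 2 / n%:R ^+ 2.
Proof.
move=> n_gt0; set S := \sum_i \sum_j M i j; set c := S / n%:R ^+ 2.
have entryE i j : modularity M i j ^+ 2 = M i j ^+ 2 + (- 2 * c) * M i j + c ^+ 2.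
  by rewrite !mxE mulr1 -/S -/c; ring.
rewrite /frob2; under eq_bigr => i _ do under eq_bigr => j _ do rewrite entryE.
under eq_bigr => i _ do rewrite !big_split /= -mulr_sumr.
rewrite !big_split /= -mulr_sumr sum_const_sqr -/S /c.
by field; rewrite pnatr_eq0 -lt0n.
Qed.

Variable C : {set 'I_n}.

Definition csign (i : 'I_n) : R := if i \in C then 1 else -1.

Lemma csign_mul_self i : csign i * csign i = 1.
Proof. by rewrite /csign; case: (i \in C); rewrite ?mulr1 ?mulrNN ?mulr1. Qed.

Lemma ZmatE i j : Zmat R C i j = csign i * csign j.
Proof. by rewrite /Zmat mxE big_ord1 !mxE. Qed.

Lemma frob2_Zmat : frob2 (Zmat R C) = n%:R ^+ 2.
Proof.
rewrite /frob2 -[RHS]mul1r -sum_const_sqr; apply: eq_bigr => i _.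
by apply: eq_bigr => j _; rewrite ZmatE expr2 mulrACA !csign_mul_self mulr1.
Qed.

Lemma sum_csign_balanced : ~~ odd n -> #|C| = n./2 -> \sum_i csign i = 0.
Proof.
move=> n_even card_C; rewrite (bigID (mem C)) /=.
rewrite (eq_bigr (fun=> 1)) => [|i Ci]; last by rewrite /csign Ci.
rewrite [X in _ + X](eq_bigr (fun=> -1)) => [|i /negbTE Ci]; last by rewrite /csign Ci.
have card_notC : #|~: C| = n./2.
  have := cardsC C; have := odd_double_half n.
  by rewrite card_ord card_C (negbTE n_even); lia.
rewrite !sumr_const [in X in _ + X](eq_card (B := ~: C)) => [|i]; last by rewrite !inE.
by rewrite card_notC -card_C mulNrn subrr.
Qed.

Lemma mxtrace_modularity_Zmat (M : 'M[R]_n) : \sum_i csign i = 0 ->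
  \tr (modularity M *m (Zmat R C)^T) = \sum_i \sum_j M i j * (csign i * csign j).
Proof.
move=> balanced; rewrite /mxtrace.
under eq_bigr => i _ do rewrite mxE.
under eq_bigr => i _ do under eq_bigr => j _ do
  rewrite [_^T _ _]mxE ZmatE /modularity !mxE mulr1 mulrBl.
under eq_bigr => i _ do rewrite sumrB -!mulr_sumr.
by rewrite sumrB -mulr_sumr -mulr_suml balanced !mulr0 subr0.
Qed.

Variables (pin pout : R).
Hypotheses (pin01 : 0 <= pin <= 1) (pout01 : 0 <= pout <= 1) (psum : 0 < pin + pout < 2).
Hypothesis balanced : \sum_i csign i = 0.

Definition pmean : R := (pin + pout) / 2.
Definition pdiff : R := (pin - pout) / 2.

Lemma sbm_pE i j : sbm_p pin pout C i j = pmean + pdiff * (csign i * csign j).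
Proof.
by rewrite /sbm_p /pmean /pdiff /csign; case: (i \in C); case: (j \in C) => /=; field.
Qed.

Lemma sbm_p01 i j : 0 <= sbm_p pin pout C i j <= 1.
Proof. by rewrite /sbm_p; case: ifP. Qed.

Lemma sbm_p_sym i j : sbm_p pin pout C i j = sbm_p pin pout C j i.
Proof. by rewrite /sbm_p eq_sym. Qed.

Lemma pmean_var_gt0 : 0 < pmean * (1 - pmean).
Proof. by rewrite /pmean; case/andP: psum => ? ?; apply: mulr_gt0; lra. Qed.

Lemma pdiff_small : 4 * pdiff ^+ 2 <= 1.
Proof. by rewrite /pdiff; case/andP: pin01 => ? ?; case/andP: pout01 => ? ?; nra. Qed.

Lemma gamma2E : gamma2 pin pout = pdiff ^+ 2 / (pmean * (1 - pmean)).
Proof.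
by rewrite /gamma2 /pdiff /pmean; case/andP: psum => ? ?; field; apply/andP; split;
  apply: lt0r_neq0; lra.
Qed.

Lemma sum_sbm_p : \sum_i \sum_j sbm_p pin pout C i j = pmean * n%:R ^+ 2.
Proof.
under eq_bigr => i _ do under eq_bigr => j _ do rewrite sbm_pE.
under eq_bigr => i _ do rewrite big_split /=.
by rewrite big_split /= sum_const_sqr sum_mul_outer balanced expr0n mulr0 addr0.
Qed.

Lemma sum_csign_sbm_p :
  \sum_i \sum_j csign i * csign j * sbm_p pin pout C i j = pdiff * n%:R ^+ 2.
Proof.
have entryE i j :
    csign i * csign j * sbm_p pin pout C i j = pmean * (csign i * csign j) + pdiff.
  rewrite sbm_pE; transitivity (pmean * (csign i * csign j)
    + pdiff * ((csign i * csign i) * (csign j * csign j))); first by ring.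
  by rewrite !csign_mul_self !mulr1.
under eq_bigr => i _ do under eq_bigr => j _ do rewrite entryE.
under eq_bigr => i _ do rewrite big_split /=.
by rewrite big_split /= sum_const_sqr sum_mul_outer balanced expr0n mulr0 add0r.
Qed.

Lemma deviation_ones (A : 'M[bool]_n) :
  deviation (sbm_p pin pout C) (fun _ _ => 1) A
  = \sum_i \sum_j adjR R A i j - pmean * n%:R ^+ 2.
Proof.
rewrite /deviation -sum_sbm_p -sumrB; apply: eq_bigr => i _.
by rewrite -sumrB; apply: eq_bigr => j _; rewrite mul1r mxE.
Qed.

Lemma deviation_csign (A : 'M[bool]_n) :
  deviation (sbm_p pin pout C) (fun i j => csign i * csign j) A
  = \sum_i \sum_j adjR R A i j * (csign i * csign j) - pdiff * n%:R ^+ 2.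
Proof.
rewrite /deviation -sum_csign_sbm_p -sumrB; apply: eq_bigr => i _.
by rewrite -sumrB; apply: eq_bigr => j _; rewrite mxE mulrBr mulrC.
Qed.

Lemma expect_sbm_deviations_sqr_le :
  expect (sbm_p pin pout C) (fun A => deviation (sbm_p pin pout C) (fun _ _ => 1) A ^+ 2)
  + expect (sbm_p pin pout C)
      (fun A => deviation (sbm_p pin pout C) (fun i j => csign i * csign j) A ^+ 2)
  <= 8 * n%:R ^+ 2.
Proof.
have one_sqr_le1 (i j : 'I_n) : (1 : R) ^+ 2 <= 1 by rewrite expr1n.
have csign_sqr_le1 i j : (csign i * csign j) ^+ 2 <= 1.
  by rewrite exprMn !expr2 !csign_mul_self mulr1.
have -> : 8 * n%:R ^+ 2 = 4 * n%:R ^+ 2 + 4 * n%:R ^+ 2 :> R by ring.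
apply: lerD.
  exact: (expect_deviation_sqr_le sbm_p01 (w := fun _ _ => 1) (fun _ _ => erefl)
    one_sqr_le1 sbm_p_sym).
exact: (expect_deviation_sqr_le sbm_p01 (w := fun i j => csign i * csign j)
  (fun i j => mulrC (csign i) (csign j)) csign_sqr_le1 sbm_p_sym).
Qed.

Definition sbm_radius (eps : R) : R := radius (pmean * (1 - pmean)) eps.

Lemma good_event_of_small_deviations eps (A : 'M[bool]_n) : (0 < n)%N -> 0 < eps ->
  deviation (sbm_p pin pout C) (fun _ _ => 1) A ^+ 2
    < (sbm_radius eps * n%:R ^+ 2) ^+ 2 ->
  deviation (sbm_p pin pout C) (fun i j => csign i * csign j) A ^+ 2
    < (sbm_radius eps * n%:R ^+ 2) ^+ 2 ->
  good_event pin pout eps C A.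
Proof.
move=> n_gt0 eps_gt0; rewrite deviation_ones deviation_csign.
set S := \sum_i \sum_j _; set T := \sum_i \sum_j _ => S_close T_close.
have nn_gt0 : 0 < n%:R ^+ 2 :> R by rewrite exprn_gt0 // ltr0n.
have [s_gt0 ratio_ge] := ratio_stable pmean_var_gt0 pdiff_small eps_gt0
  (scaled_sqr_lt nn_gt0 S_close) (scaled_sqr_lt nn_gt0 T_close).
have frobE : frob2 (modularity (adjR R A))
           = n%:R ^+ 2 * (S / n%:R ^+ 2 - (S / n%:R ^+ 2) ^+ 2).
  by rewrite frob2_modularity // frob2_adjR -/S; field; rewrite pnatr_eq0 -lt0n.
apply/andP; split.
  apply/eqP => M0; move: frobE; rewrite M0 /frob2 big1 => [/esym/eqP|i _].
    by rewrite mulf_eq0 (negbTE (lt0r_neq0 nn_gt0)) (negbTE (lt0r_neq0 s_gt0)).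
  by rewrite big1 // => j _; rewrite mxE expr0n.
rewrite gamma2E /cos2 mxtrace_modularity_Zmat // -/T frobE frob2_Zmat.
move: (S / n%:R ^+ 2 - _) s_gt0 ratio_ge => s s_gt0 ratio_ge.
have -> : T ^+ 2 / (n%:R ^+ 2 * s * n%:R ^+ 2) = (T / n%:R ^+ 2) ^+ 2 / s.
  by field; rewrite !lt0r_neq0 // ltr0n.
exact: ratio_ge.
Qed.

Lemma sbm_good_event_prob_ge eps : (0 < n)%N -> 0 < eps ->
  1 - 8 / (sbm_radius eps * n%:R) ^+ 2
  <= sbm_prob pin pout C (good_event pin pout eps C).
Proof.
move=> n_gt0 eps_gt0; set r := sbm_radius eps.
have r_gt0 : 0 < r := radius_gt0 pmean_var_gt0 eps_gt0.
set K := (r * n%:R ^+ 2) ^+ 2.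
have K_gt0 : 0 < K by rewrite exprn_gt0 // mulr_gt0 // exprn_gt0 // ltr0n.
pose devS := deviation (sbm_p pin pout C) (fun _ _ => 1).
pose devT := deviation (sbm_p pin pout C) (fun i j => csign i * csign j).
change (1 - 8 / (r * n%:R) ^+ 2 <= bern_prob (sbm_p pin pout C) (good_event pin pout eps C)).
rewrite bern_prob_predC lerD2l lerN2.
apply: (le_trans (bern_prob_le_expect sbm_p01
  (X := fun A => K^-1 * (devS A ^+ 2 + devT A ^+ 2)) _ _)).
- move=> A _; rewrite /= leNgt; apply: contra => small.
  have [S_small T_small] : devS A ^+ 2 < K /\ devT A ^+ 2 < K.
    rewrite mulrC ltr_pdivrMr // mul1r in small.
    by split; have := sqr_ge0 (devS A); have := sqr_ge0 (devT A); lra.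
  exact: good_event_of_small_deviations.
- by move=> A _; rewrite mulr_ge0 ?invr_ge0 ?addr_ge0 ?sqr_ge0 // ltW.
rewrite expectZ expectD.
apply: le_trans (ler_wpM2l _ expect_sbm_deviations_sqr_le) _.
  by rewrite invr_ge0 ltW.
have n_neq0 : n%:R != 0 :> R by rewrite pnatr_eq0 -lt0n.
suff -> : K^-1 * (8 * n%:R ^+ 2) = 8 / (r * n%:R) ^+ 2 by [].
by rewrite /K; field; rewrite n_neq0 lt0r_neq0.
Qed.

End Community.

Theorem lemma9 (R : archiRealFieldType) (pin pout : R) :
  0 <= pin <= 1 -> 0 <= pout <= 1 -> 0 < pin + pout < 2 ->
  forall eps : R, 0 < eps ->
  forall delta : R, 0 < delta ->
  exists N : nat, forall n : nat, ~~ odd n -> (N <= n)%N ->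
    forall C : {set 'I_n}, #|C| = n./2 ->
      1 - delta <= sbm_prob pin pout C (good_event pin pout eps C).
Proof.
move=> pin01 pout01 psum eps eps_gt0 delta delta_gt0.
set r := sbm_radius pin pout eps.
have r_gt0 : 0 < r := radius_gt0 (pmean_var_gt0 psum) eps_gt0.
have rd_gt0 : 0 < r ^+ 2 * delta by rewrite mulr_gt0 ?exprn_gt0.
have bound_ge0 : 0 <= 8 / (r ^+ 2 * delta) by rewrite divr_ge0 // ltW.
exists (Num.Def.archi_bound (8 / (r ^+ 2 * delta))) => n n_even n_ge C card_C.
have n_big : 8 / (r ^+ 2 * delta) < n%:R.
  by apply: lt_le_trans (archi_boundP bound_ge0) _; rewrite ler_nat.
have n_gt0 : (0 < n)%N by rewrite -(ltr0n R); exact: le_lt_trans bound_ge0 n_big.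
apply: le_trans (sbm_good_event_prob_ge pin01 pout01 psum
  (sum_csign_balanced R n_even card_C) n_gt0 eps_gt0).
rewrite lerD2l lerN2 ler_pdivrMr; last by rewrite exprn_gt0 // (mulr_gt0 r_gt0) ?ltr0n.
rewrite ltr_pdivrMr // in n_big.
have n_le_sqr : n%:R * (r ^+ 2 * delta) <= n%:R ^+ 2 * (r ^+ 2 * delta).
  by apply: ler_wpM2r; [exact: ltW | rewrite expr2 ler_peMl ?ler1n].
have -> : delta * (r * n%:R) ^+ 2 = n%:R ^+ 2 * (r ^+ 2 * delta) by ring.
exact: le_trans (ltW n_big) n_le_sqr.
Qed.
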